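(* Let $R$ be a local ring with Jacobson radical $J(R)$, set $\overline{R}=R/J(R)$, and let $C_n$ be a cyclic group of order $n$. If the characteristic of $\overline{R}$ is not $2$, then the group ring $RC_n$ is 2-clean.
   Context: A local ring is a ring $R$ such that $R/J(R)$ is a division ring. A ring $S$ is 2-clean if every element of $S$ can be written as $e+u_1+u_2$ with $e=e^2\in S$ and $u_1,u_2$ units of $S$. *)

From mathcomp Require Import all_boot all_algebra.
Set Implicit Arguments. Unset Strict Implicit. Unset Printing Implicit Defensive.
Import GRing.Theory.
Local Open Scope ring_scope.

Definition jacobson (R : unitRingType) (x : R) : Prop :=
  forall r : R, (1 - r * x) \is a GRing.unit.

(* R is local: R / J(R) is a division ring, i.e. the quotient is nontrivial
   (1 \notin J(R)) and every class x + J(R) with x \notin J(R) has a two-sided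
   inverse modulo J(R). *)
Definition local_ring (R : unitRingType) : Prop :=
  ~ jacobson (1 : R) /\
  forall x : R, ~ jacobson x ->
    exists y : R, jacobson (x * y - 1) /\ jacobson (y * x - 1).

Definition char_quot_not2 (R : unitRingType) : Prop := ~ jacobson (2%:R : R).

Definition grp_ring (R : unitRingType) (n : nat) := {ffun 'I_n -> R}.

Definition gr_one (R : unitRingType) (n : nat) : grp_ring R n :=
  [ffun i : 'I_n => if val i == 0%N then 1 else 0].

Definition gr_mul (R : unitRingType) (n : nat) (f g : grp_ring R n) : grp_ring R n :=
  [ffun k : 'I_n => \sum_(i : 'I_n) \sum_(j : 'I_n | ((i + j) %% n)%N == val k)
      f i * g j].

Definition gr_unit (R : unitRingType) (n : nat) (u : grp_ring R n) : Prop :=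
  exists v : grp_ring R n, gr_mul u v = gr_one R n /\ gr_mul v u = gr_one R n.

Definition gr_idem (R : unitRingType) (n : nat) (e : grp_ring R n) : Prop :=
  gr_mul e e = e.

Definition gr_two_clean (R : unitRingType) (n : nat) : Prop :=
  forall a : grp_ring R n, exists e u1 u2 : grp_ring R n,
    [/\ gr_idem e, gr_unit u1, gr_unit u2 & a = e + u1 + u2].

From HB Require Import structures.
From mathcomp Require Import all_boot all_algebra.
From mathcomp Require Import boolp.
Set Implicit Arguments. Unset Strict Implicit. Unset Printing Implicit Defensive.
Import GRing.Theory.
Local Open Scope ring_scope.
Local Open Scope quotient_scope.

(* In fact every element of R C_n is a sum of two units (take e = 0).
   Let I = J(R) C_n.  Elements 1 - j with j in I are units (Nakayama, by
   Gaussian elimination), so units lift from Q = R C_n / I to R C_n.  As Q is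
   an n-dimensional algebra over the division ring R / J(R), the chains
   a^k Q and {x | a^k x = 0} stabilise after n steps, i.e. a^n = a^2n b and
   a^2n x = 0 -> a^n x = 0 in Q.  Fitting's lemma then writes a = ap + aq with
   p idempotent, q = 1 - p, ap a unit of pQp and aq nilpotent, so that
   u = ap/2 + q and a - u = ap/2 + (aq - q) are units of Q: this is where
   char R/J(R) <> 2 is used.  Dimensions over the noncommutative division
   ring R/J(R) are replaced by the sets of leading positions of echelon
   forms. *)

Definition invertible (T : pzRingType) (u : T) := exists v, u * v = 1 /\ v * u = 1.

Section Invertible.
Variable T : pzRingType.
Implicit Types u v w : T.

Lemma invertible_of_inverses u v w : u * v = 1 -> w * u = 1 -> invertible u.
Proof.
move=> uv wu; have vw : v = w by rewrite -[w]mulr1 -uv mulrA wu mul1r.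
by exists v; rewrite {2}vw.
Qed.

Lemma invertible_rmorph (S : pzRingType) (f : {rmorphism T -> S}) u :
  invertible u -> invertible (f u).
Proof. by case=> v [uv vu]; exists (f v); rewrite -!rmorphM uv vu rmorph1. Qed.

Lemma invertible_1B_nilpotent u k : u ^+ k = 0 -> invertible (1 - u).
Proof.
move=> uk; have := subrX1 u k; rewrite uk sub0r => /eqP; rewrite eqr_oppLR => /eqP E.
set G := \sum_(i < k) u ^+ i in E.
have uG : u * G = G * u.
  by rewrite mulr_suml mulr_sumr; apply: eq_bigr => i _; rewrite -exprS exprSr.
apply: (@invertible_of_inverses _ G G); first by rewrite -opprB mulNr -E.
by rewrite mulrBr mulr1 -uG -[G in G - _]mul1r -mulrBl -opprB mulNr -E.
Qed.

Lemma comm_inverse_nat (h : T) n :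
  n%:R * h = 1 -> h * n%:R = 1 -> forall x, GRing.comm h x.
Proof.
move=> nh hn x; rewrite /GRing.comm -[h * x]mulr1 -nh mulrA -(mulrA h) (commr_nat x n).
by rewrite !mulrA hn mul1r.
Qed.

End Invertible.

Lemma invertibleP (R : unitRingType) (x : R) : reflect (invertible x) (x \is a GRing.unit).
Proof. by apply: (iffP unitrP) => -[y [? ?]]; exists y. Qed.

Section Peirce.
Variable T : pzRingType.

Lemma corner_idem (e x : T) : e * e = e -> e * x * e = x -> e * x = x /\ x * e = x.
Proof. by move=> ee <-; rewrite !mulrA ee -!mulrA ee. Qed.

Variable p : T.
Hypothesis pp : p * p = p.
Local Notation q := (1 - p).

Lemma mulr_idem_compl : p * q = 0.
Proof. by rewrite mulrBr mulr1 pp subrr. Qed.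

Lemma mulr_compl_idem : q * p = 0.
Proof. by rewrite mulrBl mul1r pp subrr. Qed.

Lemma compl_idem : q * q = q.
Proof. by rewrite mulrBl mul1r mulr_idem_compl subr0. Qed.

Lemma invertible_peirce_sum x x' y y' :
  p * x * p = x -> p * x' * p = x' -> q * y * q = y -> q * y' * q = y' ->
  x * x' = p -> x' * x = p -> y * y' = q -> y' * y = q -> invertible (x + y).
Proof.
move=> /(corner_idem pp) [px xp] /(corner_idem pp) [px' x'p].
move=> /(corner_idem compl_idem) [qy yq] /(corner_idem compl_idem) [qy' y'q].
move=> xx' x'x yy' y'y.
have orth (u v : T) e f : e * f = 0 -> u * e = u -> f * v = v -> u * v = 0.
  by move=> ef <- <-; rewrite mulrA -(mulrA u) ef mulr0 mul0r.
exists (x' + y'); rewrite !mulrDl !mulrDr xx' x'x yy' y'y.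
rewrite (orth _ _ _ _ mulr_idem_compl xp qy') (orth _ _ _ _ mulr_compl_idem yq px').
rewrite (orth _ _ _ _ mulr_idem_compl x'p qy) (orth _ _ _ _ mulr_compl_idem y'q px).
by rewrite !(addr0, add0r) addrC subrK.
Qed.

End Peirce.

Section FittingDecomposition.
Variables (T : pzRingType) (a b : T) (k : nat).
Hypotheses (k_gt0 : (0 < k)%N) (pow_reg : a ^+ k = a ^+ (k + k) * b)
  (pow_ann : forall x, a ^+ (k + k) * x = 0 -> a ^+ k * x = 0).

(* p = a^k b is the Fitting idempotent of a: it commutes with a, ap is
   invertible in pTp with inverse w, and a(1 - p) is nilpotent. *)

Section Witnesses.
Variables (p w : T).
Hypotheses (pE : p = a ^+ k * b) (wE : w = p * a ^+ k.-1 * b * p).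
Local Notation y := (a ^+ k).

Let cancel_y x : y * (y * x) = 0 -> y * x = 0.
Proof. by rewrite mulrA -exprD; apply: pow_ann. Qed.

Let yp : y * p = y.
Proof. by rewrite pE mulrA -exprD -pow_reg. Qed.

Let ay : a * y = y * a.
Proof. by rewrite -exprS exprSr. Qed.

Lemma fitting_idem : p * p = p.
Proof.
apply/eqP; rewrite -subr_eq0 {1 3}pE -mulrA -mulrBr; apply/eqP/cancel_y.
by rewrite mulrBr mulrA -pE mulrBr mulrA !yp subrr.
Qed.

Lemma fitting_comm : a * p = p * a.
Proof.
apply/eqP; rewrite -subr_eq0 pE mulrA ay -!mulrA -mulrBr; apply/eqP/cancel_y.
rewrite !mulrBr !mulrA -(mulrA y y b) -pE yp -(mulrA y y a) -ay mulrA -ay.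
by rewrite -(mulrA (a * y)) -pE -(mulrA a) yp ay subrr.
Qed.

Lemma fitting_nilpotent : (a * (1 - p)) ^+ k = 0.
Proof.
have aq : a * (1 - p) = (1 - p) * a by rewrite mulrBr mulrBl mulr1 mul1r fitting_comm.
have qq := compl_idem fitting_idem.
have aqX i : (a * (1 - p)) ^+ i.+1 = a ^+ i.+1 * (1 - p).
  elim: i => [|i IH]; first by rewrite !expr1.
  by rewrite exprSr IH -mulrA (mulrA (1 - p)) -aq -mulrA qq mulrA -exprSr.
by have := aqX k.-1; rewrite prednK // => ->; rewrite mulrBr mulr1 yp subrr.
Qed.

Lemma fitting_mulrV : a * w = p.
Proof.
rewrite wE !mulrA fitting_comm -(mulrA p a) -exprS prednK //.
by rewrite -(mulrA p y b) -pE !fitting_idem.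
Qed.

Lemma fitting_corner : p * w * p = w.
Proof. by rewrite wE !mulrA fitting_idem -!mulrA fitting_idem. Qed.

Lemma fitting_mulVr : w * a = p.
Proof.
have [pw wp] := corner_idem fitting_idem fitting_corner.
set x := w * a - p.
have px : p * x = x by rewrite /x mulrBr mulrA pw fitting_idem.
have yx : y * x = 0.
  have yw : y * w = a ^+ k.-1 * p.
    by rewrite wE !mulrA yp -exprD addnC exprD -(mulrA _ y b) -pE -mulrA fitting_idem.
  rewrite /x mulrBr mulrA yw yp -mulrA -fitting_comm mulrA -exprSr prednK //.
  by rewrite yp subrr.
have : y * (b * x) = 0 by apply: cancel_y; rewrite (mulrA y b x) -pE px.
by rewrite (mulrA y b x) -pE px => x0; apply/eqP; rewrite -subr_eq0 -/x x0.
Qed.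

End Witnesses.

Lemma fitting_decomposition : exists p w : T,
  [/\ p * p = p, a * p = p * a, p * w * p = w, a * w = p & w * a = p]
  /\ (a * (1 - p)) ^+ k = 0.
Proof.
exists (a ^+ k * b), (a ^+ k * b * a ^+ k.-1 * b * (a ^+ k * b)).
by do ![split]; [exact: fitting_idem | exact: fitting_comm | exact: fitting_corner
  | exact: fitting_mulrV | exact: fitting_mulVr | exact: fitting_nilpotent].
Qed.

End FittingDecomposition.

Section TwoUnits.
Variables (T : pzRingType) (a p q w h : T) (k : nat).
Hypotheses (pp : p * p = p) (qE : q = 1 - p) (ap : a * p = p * a)
  (pwp : p * w * p = w) (aw : a * w = p) (wa : w * a = p) (nil : (a * q) ^+ k = 0).
Hypotheses (two_h : 2%:R * h = 1) (h_two : h * 2%:R = 1).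

(* With h = 1/2, u = h ap + q and a - u = h ap + (aq - q) are block diagonal
   for p + q = 1, with block inverses 2w, q and 2w, -q (1 - aq)^-1 q. *)
Let hC := comm_inverse_nat two_h h_two.
Let qq : q * q = q. Proof. by rewrite qE compl_idem. Qed.
Let aq : a * q = q * a. Proof. by rewrite qE mulrBr mulrBl mulr1 mul1r ap. Qed.

Let x_corner : p * (h * (a * p)) * p = h * (a * p).
Proof. by rewrite mulrA -(hC p) -!mulrA pp ap (mulrA p) pp. Qed.

Let x'_corner : p * (2%:R * w) * p = 2%:R * w.
Proof. by rewrite mulrA (commr_nat p 2) -!mulrA (mulrA p) pwp. Qed.

Let xx' : h * (a * p) * (2%:R * w) = p.
Proof.
have [pw _] := corner_idem pp pwp.
by rewrite mulrA -(mulrA h) (commr_nat (a * p) 2) mulrA h_two mul1r -mulrA pw aw.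
Qed.

Let x'x : 2%:R * w * (h * (a * p)) = p.
Proof. by rewrite mulrA -(mulrA _ w h) -(hC w) (mulrA _ h w) two_h mul1r mulrA wa pp. Qed.

Lemma fitting_unit_sum : invertible (h * (a * p) + q).
Proof.
by apply: (invertible_peirce_sum (y' := q) pp x_corner x'_corner _ _ xx' x'x); rewrite -qE ?qq.
Qed.

Lemma fitting_unit_diff : invertible (a - (h * (a * p) + q)).
Proof.
have -> : a - (h * (a * p) + q) = h * (a * p) + (a * q - q).
  rewrite {1}[a](_ : _ = h * (a * p) + h * (a * p) + a * q).
    by rewrite opprD addrA (addrAC (h * (a * p) + _)) addrK -addrA.
  have hh : h + h = 1 by rewrite -mulr2n -mulr_natr h_two.
  by rewrite -mulrDl hh mul1r qE mulrBr mulr1 addrC subrK.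
have [v [Nv vN]] := invertible_1B_nilpotent nil.
have qN : q * (a * q) = a * q by rewrite mulrA -aq -mulrA qq.
have Nq : a * q * q = a * q by rewrite -mulrA qq.
apply: (invertible_peirce_sum (y' := - (q * v * q)) pp x_corner x'_corner _ _ xx' x'x).
all: rewrite -qE.
- by rewrite mulrBr mulrBl qN Nq !qq.
- by rewrite mulrN mulNr !mulrA qq -mulrA qq.
- have Mq : (q - a * q) * q = q - a * q by rewrite mulrBl Nq qq.
  have qM : q - a * q = q * (1 - a * q) by rewrite mulrBr mulr1 qN.
  by rewrite mulrN -mulNr opprB !mulrA Mq qM -(mulrA q) Nv mulr1 qq.
- have qM : q * (q - a * q) = q - a * q by rewrite mulrBr qN qq.
  have Mq : q - a * q = (1 - a * q) * q by rewrite mulrBl mul1r Nq.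
  by rewrite mulNr -mulrN opprB -!mulrA qM Mq (mulrA v) vN mul1r qq.
Qed.

End TwoUnits.

Lemma strongly_pi_regular_two_units (T : pzRingType) (a b : T) k :
  (0 < k)%N -> a ^+ k = a ^+ (k + k) * b ->
  (forall x, a ^+ (k + k) * x = 0 -> a ^+ k * x = 0) ->
  invertible (2%:R : T) -> exists2 u, invertible u & invertible (a - u).
Proof.
move=> k_gt0 reg ann [h [two_h h_two]].
have [p [w [[pp ap pwp aw wa] nil]]] := fitting_decomposition k_gt0 reg ann.
exists (h * (a * p) + (1 - p)); first exact: (fitting_unit_sum (w := w)).
exact: (fitting_unit_diff (w := w) (k := k)).
Qed.

Section Jacobson.
Variable R : unitRingType.
Local Notation J := (@jacobson R).

Lemma unitr_1BmulC (x y : R) :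
  (1 - x * y) \is a GRing.unit -> (1 - y * x) \is a GRing.unit.
Proof.
move=> U; set u := (1 - x * y)^-1.
have uE : u - x * y * u = 1 by rewrite -{1}(mul1r u) -mulrBl mulrV.
have Eu : u - u * (x * y) = 1 by rewrite -{1}(mulr1 u) -mulrBr mulVr.
apply/unitrP; exists (1 + y * u * x); split.
- rewrite mulrDl mul1r mulrBr mulr1.
  have -> : y * u * x * (y * x) = y * (u * (x * y)) * x by rewrite !mulrA.
  by rewrite -mulrBl -mulrBr Eu mulr1 subrK.
- rewrite mulrDr mulr1 mulrBl mul1r.
  have -> : y * x * (y * u * x) = y * (x * y * u) * x by rewrite !mulrA.
  by rewrite -mulrBl -mulrBr uE mulr1 subrK.
Qed.

Lemma jacobson0 : J 0.
Proof. by move=> r; rewrite mulr0 subr0 unitr1. Qed.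

Lemma jacobsonMl r x : J x -> J (r * x).
Proof. by move=> Jx s; rewrite mulrA. Qed.

Lemma jacobsonMr x r : J x -> J (x * r).
Proof. by move=> Jx s; rewrite mulrA; apply: unitr_1BmulC; rewrite mulrA. Qed.

Lemma jacobsonD x y : J x -> J y -> J (x + y).
Proof.
move=> Jx Jy r; have U := Jx r; set v := (1 - r * x)^-1.
have -> : 1 - r * (x + y) = (1 - r * x) * (1 - v * r * y).
  by rewrite mulrBr mulr1 !mulrA mulrV // mul1r mulrDr opprD addrA.
by rewrite unitrMr // Jy.
Qed.

Lemma jacobsonN x : J x -> J (- x).
Proof. by rewrite -mulN1r; apply: jacobsonMl. Qed.

Lemma jacobson_sum (I : finType) (P : pred I) (F : I -> R) :
  (forall i, P i -> J (F i)) -> J (\sum_(i | P i) F i).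
Proof. by move=> JF; apply: (big_ind J) => //; [apply: jacobson0 | apply: jacobsonD]. Qed.

Lemma jacobson_unit1B x : J x -> (1 - x) \is a GRing.unit.
Proof. by move=> /(_ 1); rewrite mul1r. Qed.

Lemma local_notjacobson_unit x : local_ring R -> ~ J x -> x \is a GRing.unit.
Proof.
case=> _ loc /loc [y [Jxy Jyx]].
have unit_1B z : J (z - 1) -> z \is a GRing.unit.
  by move=> /(_ (-1)); rewrite mulN1r opprK addrC subrK.
have [xy yx] := (unit_1B _ Jxy, unit_1B _ Jyx).
apply/invertibleP/(@invertible_of_inverses _ _ (y / (x * y)) ((y * x)^-1 * y)).
- by rewrite mulrA mulrV.
- by rewrite -mulrA mulVr.
Qed.

End Jacobson.

Section GroupRing.
Variables (R : unitRingType) (m : nat).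
(* Indexed by m with n = m.+1, so that 'I_n carries the group Z/nZ. *)
Local Notation n := m.+1.

Definition gring := grp_ring R n.
HB.instance Definition _ := GRing.Zmodule.on gring.
Implicit Types f g h : gring.

Lemma gr_mulE f g k : gr_mul f g k = \sum_(i : 'I_n) f i * g (k - i).
Proof.
rewrite ffunE; apply: eq_bigr => i _; rewrite (big_pred1 (k - i)) // => j /=.
rewrite -[((i + j) %% n)%N]/(val (i + j)) val_eqE.
by apply/eqP/eqP => [<-|->]; rewrite addrC ?addKr ?subrK.
Qed.

Lemma gr_oneE (i : 'I_n) : gr_one R n i = if i == 0 then 1 else 0.
Proof. by rewrite ffunE -val_eqE. Qed.

Lemma gr_mulA : associative (@gr_mul R n : gring -> gring -> gring).
Proof.
move=> f g h; apply/ffunP => k; rewrite !gr_mulE.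
under [RHS]eq_bigr do rewrite gr_mulE mulr_suml.
under [LHS]eq_bigr do rewrite gr_mulE mulr_sumr.
rewrite [RHS]exchange_big /=; apply: eq_bigr => i _.
rewrite [RHS](reindex_inj (addrI i)) /=; apply: eq_bigr => l _.
by rewrite mulrA (addrC i l) addrK opprD addrA addrAC.
Qed.

Lemma gr_mul1 : left_id (gr_one R n : gring) (@gr_mul R n).
Proof.
move=> g; apply/ffunP => k; rewrite gr_mulE (bigD1 0) //= big1 => [|i /negbTE i0].
  by rewrite gr_oneE eqxx mul1r subr0 addr0.
by rewrite gr_oneE i0 mul0r.
Qed.

Lemma gr_mulr1 : right_id (gr_one R n : gring) (@gr_mul R n).
Proof.
move=> g; apply/ffunP => k; rewrite gr_mulE (bigD1 k) //= big1 => [|i ik].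
  by rewrite gr_oneE subrr eqxx mulr1 addr0.
by rewrite gr_oneE subr_eq0 eq_sym (negbTE ik) mulr0.
Qed.

Lemma gr_mulDl : left_distributive (@gr_mul R n : gring -> gring -> gring) +%R.
Proof.
move=> f g h; apply/ffunP => k; rewrite gr_mulE ffunE !gr_mulE -big_split.
by apply: eq_bigr => i _; rewrite ffunE mulrDl.
Qed.

Lemma gr_mulDr : right_distributive (@gr_mul R n : gring -> gring -> gring) +%R.
Proof.
move=> f g h; apply/ffunP => k; rewrite gr_mulE ffunE !gr_mulE -big_split.
by apply: eq_bigr => i _; rewrite ffunE mulrDr.
Qed.

Lemma gr_one_neq0 : gr_one R n != 0 :> gring.
Proof. by apply/eqP => /ffunP /(_ 0); rewrite gr_oneE ffunE eqxx; apply/eqP/oner_neq0. Qed.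

HB.instance Definition _ := GRing.Zmodule_isNzRing.Build gring
  gr_mulA gr_mul1 gr_mulr1 gr_mulDl gr_mulDr gr_one_neq0.

Lemma gring_mulE f g k : (f * g) k = \sum_(i : 'I_n) f i * g (k - i).
Proof. exact: gr_mulE. Qed.

Lemma gr_coefD f g i : (f + g) i = f i + g i.
Proof. by rewrite ffunE. Qed.

Lemma gr_coefB f g i : (f - g) i = f i - g i.
Proof. by rewrite !ffunE. Qed.

Definition gr_const (r : R) : gring := [ffun i => if i == 0 then r else 0].

Lemma gr_mul_constE f r i : (f * gr_const r) i = f i * r.
Proof.
rewrite gring_mulE (bigD1 i) //= big1 => [|k ki]; first by rewrite ffunE subrr eqxx addr0.
by rewrite ffunE subr_eq0 eq_sym (negbTE ki) mulr0.
Qed.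

Lemma gr_const_zmod : zmod_morphism gr_const.
Proof. by move=> r s; apply/ffunP => i; rewrite !ffunE; case: ifP; rewrite ?subr0. Qed.

Lemma gr_const_monoid : monoid_morphism gr_const.
Proof.
split=> [|r s]; apply/ffunP => i; first by rewrite [RHS]gr_oneE ffunE.
by rewrite gr_mul_constE !ffunE; case: ifP; rewrite ?mul0r.
Qed.

HB.instance Definition _ := GRing.isZmodMorphism.Build R gring gr_const gr_const_zmod.
HB.instance Definition _ := GRing.isMonoidMorphism.Build R gring gr_const gr_const_monoid.

Definition gr_rad : {pred gring} := fun f => `[< forall i, jacobson (f i) >].

Lemma gr_radP f : reflect (forall i, jacobson (f i)) (f \in gr_rad).
Proof. exact: asboolP. Qed.

Lemma gr_rad_zmod_closed : zmod_closed gr_rad.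
Proof.
split; first by apply/gr_radP => i; rewrite ffunE; apply: jacobson0.
move=> f g /gr_radP Jf /gr_radP Jg; apply/gr_radP => i; rewrite !ffunE.
by apply: jacobsonD; last apply: jacobsonN.
Qed.

HB.instance Definition _ := GRing.isZmodClosed.Build gring gr_rad gr_rad_zmod_closed.

Lemma gr_const_rad r : jacobson r -> gr_const r \in gr_rad.
Proof.
by move=> Jr; apply/gr_radP => i; rewrite ffunE; case: ifP => // _; apply: jacobson0.
Qed.

Lemma gr_radMl g f : f \in gr_rad -> g * f \in gr_rad.
Proof.
move=> /gr_radP Jf; apply/gr_radP => k; rewrite gring_mulE.
by apply: jacobson_sum => i _; apply: jacobsonMl.
Qed.

Lemma gr_radMr f g : f \in gr_rad -> f * g \in gr_rad.
Proof.
move=> /gr_radP Jf; apply/gr_radP => k; rewrite gring_mulE.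
by apply: jacobson_sum => i _; apply: jacobsonMr.
Qed.

Section Nakayama.
Variable j : gring.
Hypothesis j_rad : j \in gr_rad.

Definition gr_delta (d : 'I_n) : gring := [ffun i => (i == d)%:R].

(* Gaussian elimination: (1 - j) g = f is solved exactly on the first t
   coefficients and modulo J(R) on the others. *)
Definition solvable_below t := forall f, exists2 g,
  f - (1 - j) * g \in gr_rad & forall i : 'I_n, (i < t)%N -> (f - (1 - j) * g) i = 0.

Lemma solvable_below0 : solvable_below 0.
Proof.
move=> f; exists f => //; rewrite mulrBl mul1r opprB addrC subrK.
exact: gr_radMr.
Qed.

Lemma solvable_belowS t : solvable_below t -> solvable_below t.+1.
Proof.
move=> solv f; have [g g_rad g0] := solv f.
have [tn|nt] := ltnP t n; last first.
  by exists g => // i _; apply: g0; apply: leq_trans (ltn_ord i) nt.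
pose d := Ordinal tn; have [g' /gr_radP g'_rad g'0] := solv (gr_delta d).
move eE: (f - (1 - j) * g) => e in g_rad g0 *.
move e'E: (gr_delta d - (1 - j) * g') => e' in g'_rad g'0 *.
pose c := (1 - e' d)^-1 * e d.
have Jc : jacobson c by apply/jacobsonMl/(gr_radP _ g_rad).
have resE : f - (1 - j) * (g + g' * gr_const c) = e - (gr_delta d - e') * gr_const c.
  by rewrite -e'E subKr -eE mulrDr opprD addrA mulrA.
exists (g + g' * gr_const c); rewrite resE.
  by rewrite rpredB // gr_radMl // gr_const_rad.
move=> i; rewrite gr_coefB gr_mul_constE gr_coefB ffunE.
rewrite ltnS leq_eqVlt => /predU1P [it | it].
  have -> : i = d by apply: val_inj.
  by rewrite eqxx mulVKr ?subrr //; apply/jacobson_unit1B/g'_rad.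
rewrite g0 // g'0 // (_ : i == d = false) ?subrr ?mul0r ?subrr //.
by rewrite -val_eqE /= ltn_eqF.
Qed.

Lemma gr_rad_rinv1B : exists v, (1 - j) * v = 1.
Proof.
have solv t : solvable_below t.
  by elim: t => [|t]; [exact: solvable_below0 | exact: solvable_belowS].
have [v _ v0] := solv n 1; exists v.
by apply/esym/eqP; rewrite -subr_eq0; apply/eqP/ffunP => i; rewrite v0 ?ffunE.
Qed.

End Nakayama.

Lemma gr_rad_unit1B j : j \in gr_rad -> invertible (1 - j).
Proof.
move=> j_rad; have [v jv] := gr_rad_rinv1B j_rad.
have [|w vw] := @gr_rad_rinv1B (- (j * v)); first by rewrite rpredN gr_radMr.
rewrite opprK -{1}jv mulrBl mul1r subrK in vw.
apply: (invertible_of_inverses (w := v) jv).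
by rewrite -[1 - j]mulr1 -{2}vw (mulrA (1 - j)) jv mul1r.
Qed.

Lemma gr_invertible_lift u v :
  u * v - 1 \in gr_rad -> v * u - 1 \in gr_rad -> invertible u.
Proof.
move=> uv vu.
have [x [uvx _]] : invertible (1 - - (u * v - 1)) by apply: gr_rad_unit1B; rewrite rpredN.
have [y [_ yvu]] : invertible (1 - - (v * u - 1)) by apply: gr_rad_unit1B; rewrite rpredN.
rewrite opprK addrC subrK in uvx; rewrite opprK addrC subrK in yvu.
by apply: (@invertible_of_inverses _ u (v * x) (y * v)); rewrite ?mulrA // -mulrA.
Qed.

End GroupRing.

Arguments gr_const {R m} r.

Lemma subset_chain_stationary (T : finType) (L : nat -> {set T}) :
  (forall k, L k.+1 \subset L k) -> exists2 k, (k <= #|T|)%N & L k \subset L k.+1.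
Proof.
move=> decL.
have [/existsP [k Lk] | none] := boolP [exists k : 'I_#|T|.+1, L k \subset L k.+1].
  by exists k; rewrite // -ltnS.
have shrink k : (k <= #|T|.+1)%N -> (#|L k| + k <= #|L 0|)%N.
  elim: k => [|k IH] kT; first by rewrite addn0.
  rewrite addnS; apply: leq_trans (IH (ltnW kT)); rewrite ltn_add2r proper_card //.
  rewrite properEneq decL andbT; apply: contraNneq none => Lk.
  by apply/existsP; exists (Ordinal kT); rewrite /= Lk.
have := leq_trans (shrink _ (leqnn _)) (leq_trans (subset_leq_card (subsetT _)) (max_card _)).
by rewrite addnS ltnNge leq_addl.
Qed.

Lemma chain_stable (A : Type) (r : A -> A -> Prop) (X : nat -> A) k0 :
  (forall x, r x x) -> (forall x y z, r x y -> r y z -> r x z) ->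
  r (X k0) (X k0.+1) -> (forall k, r (X k) (X k.+1) -> r (X k.+1) (X k.+2)) ->
  forall k i, (k0 <= k)%N -> r (X k) (X (k + i)%N).
Proof.
move=> refl trans base next.
have step k : (k0 <= k)%N -> r (X k) (X k.+1).
  elim: k => [|k IH]; first by rewrite leqn0 => /eqP <-.
  by rewrite leq_eqVlt => /predU1P [<- //|]; rewrite ltnS => /IH; apply: next.
move=> k i k0k; elim: i => [|i IH]; first by rewrite addn0; apply: refl.
by rewrite addnS; apply: trans IH (step _ _); apply: leq_trans k0k (leq_addr _ _).
Qed.

Section Chains.
Variables (R : unitRingType) (m : nat).
Hypothesis Rloc : local_ring R.
Local Notation n := m.+1.
Local Notation gring := (gring R m).
Local Notation gr_rad := (@gr_rad R m).

(* Right R-submodules containing J(R) C_n: the R/J(R)-subspaces of Q. *)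
Definition gr_subspace (V : gring -> Prop) :=
  [/\ forall f, f \in gr_rad -> V f, forall f g, V f -> V g -> V (f + g)
    & forall f r, V f -> V (f * gr_const r)].

Definition gr_lead (f : gring) (d : 'I_n) :=
  f d \is a GRing.unit /\ forall i : 'I_n, (d < i)%N -> jacobson (f i).

(* The set of leading positions stands in for the dimension of V over the
   division ring R/J(R) (see gr_subspace_sub). *)
Definition gr_leads (V : gring -> Prop) : {set 'I_n} :=
  [set d | `[< exists2 f, V f & gr_lead f d >]].

Lemma gr_leads_mono (V W : gring -> Prop) :
  (forall f, W f -> V f) -> gr_leads W \subset gr_leads V.
Proof.
move=> WV; apply/subsetP => d; rewrite !inE => /asboolP [f Wf Lf].
by apply/asboolP; exists f => //; apply: WV.
Qed.

Lemma gr_subspace_sub (V W : gring -> Prop) :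
  gr_subspace V -> gr_subspace W -> (forall f, W f -> V f) ->
  gr_leads V \subset gr_leads W -> forall f, V f -> W f.
Proof.
move=> [_ VD VZ] [W0 WD WZ] WV leadsVW.
pose below t := forall f, V f -> (forall i : 'I_n, (t <= i)%N -> jacobson (f i)) -> W f.
suff Wt t : below t by move=> f Vf; apply: (Wt n) => // i; rewrite leqNgt ltn_ord.
elim: t => [|t IH] f Vf Jf; first by apply: W0; apply/gr_radP => i; apply: Jf.
have [tn|nt] := ltnP t n; last first.
  by apply: IH => // i ti; move: (leq_trans nt ti); rewrite leqNgt ltn_ord.
pose d := Ordinal tn.
have [Jd|] := pselect (jacobson (f d)).
  apply: IH => // i; rewrite leq_eqVlt => /predU1P [it|]; last exact: Jf.
  by have -> : i = d by apply: val_inj.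
move=> /(local_notjacobson_unit Rloc) Ud.
have : d \in gr_leads V by rewrite inE; apply/asboolP; exists f.
move=> /(subsetP leadsVW); rewrite inE => /asboolP [g Wg [Ug Lg]].
pose r := - ((g d)^-1 * f d).
have fE : f = (f + g * gr_const r) + g * gr_const (- r).
  by apply/ffunP => i; rewrite !gr_coefD !gr_mul_constE -addrA -mulrDr subrr mulr0 addr0.
rewrite fE; apply: WD; last exact: WZ.
apply: IH; first by apply: VD => //; apply/VZ/WV.
move=> i; rewrite gr_coefD gr_mul_constE leq_eqVlt => /predU1P [it|ti].
  have -> : i = d by apply: val_inj.
  by rewrite mulrN mulrA mulrV // mul1r subrr; apply: jacobson0.
by apply: jacobsonD; [apply: Jf | apply/jacobsonMr/Lg].
Qed.

Lemma gr_chain_dec (X : nat -> gring -> Prop) :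
  (forall k, gr_subspace (X k)) -> (forall k f, X k.+1 f -> X k f) ->
  exists2 k, (k <= n)%N & forall f, X k f -> X k.+1 f.
Proof.
move=> sX decX.
have decL k : gr_leads (X k.+1) \subset gr_leads (X k) by apply/gr_leads_mono/decX.
have [k] := subset_chain_stationary decL.
rewrite card_ord => kn leadsX; exists k => //.
exact: gr_subspace_sub (sX k) (sX k.+1) (decX k) leadsX.
Qed.

Lemma gr_chain_inc (X : nat -> gring -> Prop) :
  (forall k, gr_subspace (X k)) -> (forall k f, X k f -> X k.+1 f) ->
  exists2 k, (k <= n)%N & forall f, X k.+1 f -> X k f.
Proof.
move=> sX incX.
have decL k : ~: gr_leads (X k.+1) \subset ~: gr_leads (X k).
  by rewrite setCS; apply/gr_leads_mono/incX.
have [k] := subset_chain_stationary decL.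
rewrite card_ord setCS => kn leadsX; exists k => //.
exact: gr_subspace_sub (sX k.+1) (sX k) (incX k) leadsX.
Qed.

Variable a : gring.

Definition gr_image k f := exists g, f - a ^+ k * g \in gr_rad.
Definition gr_kernel k f := a ^+ k * f \in gr_rad.

Lemma gr_image_subspace k : gr_subspace (gr_image k).
Proof.
split=> [f f_rad | f f' [g g_rad] [g' g'_rad] | f r [g g_rad]].
- by exists 0; rewrite mulr0 subr0.
- exists (g + g'); rewrite mulrDr opprD addrACA; exact: rpredD.
- by exists (g * gr_const r); rewrite mulrA -mulrBl gr_radMr.
Qed.

Lemma gr_kernel_subspace k : gr_subspace (gr_kernel k).
Proof.
split=> [f f_rad | f g | f r]; rewrite /gr_kernel.
- exact: gr_radMl.
- by rewrite mulrDr; apply: rpredD.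
- by rewrite mulrA; apply: gr_radMr.
Qed.

Lemma gr_imageS k f : gr_image k.+1 f -> gr_image k f.
Proof. by case=> g g_rad; exists (a * g); rewrite mulrA -exprSr. Qed.

Lemma gr_kernelS k f : gr_kernel k f -> gr_kernel k.+1 f.
Proof. by rewrite /gr_kernel exprS -mulrA; apply: gr_radMl. Qed.

Lemma gr_image_next k : (forall f, gr_image k f -> gr_image k.+1 f) ->
  forall f, gr_image k.+1 f -> gr_image k.+2 f.
Proof.
move=> stab f [g g_rad].
have [g' g'_rad] : gr_image k.+1 (a ^+ k * g) by apply: stab; exists g; rewrite subrr rpred0.
exists g'.
have -> : f - a ^+ k.+2 * g' = f - a ^+ k.+1 * g + a * (a ^+ k * g - a ^+ k.+1 * g').
  by rewrite mulrBr !mulrA -!exprS addrA subrK.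
by rewrite rpredD // gr_radMl.
Qed.

Lemma gr_kernel_next k : (forall f, gr_kernel k.+1 f -> gr_kernel k f) ->
  forall f, gr_kernel k.+2 f -> gr_kernel k.+1 f.
Proof.
move=> stab f; rewrite /gr_kernel exprSr -mulrA => /stab.
by rewrite /gr_kernel mulrA -exprSr.
Qed.

Lemma gr_rad_pi_regular : exists b, a ^+ n - a ^+ (n + n) * b \in gr_rad.
Proof.
have [k0 k0n stab] := gr_chain_dec gr_image_subspace gr_imageS.
have img_n : gr_image n (a ^+ n) by exists 1; rewrite mulr1 subrr rpred0.
have [b] := chain_stable (r := fun U V => forall f, U f -> V f) (fun _ _ => id)
  (fun _ _ _ UV VW f => VW f \o UV f) stab gr_image_next n k0n _ img_n.
by exists b.
Qed.

Lemma gr_rad_pi_ann f : a ^+ (n + n) * f \in gr_rad -> a ^+ n * f \in gr_rad.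
Proof.
have [k0 k0n stab] := gr_chain_inc gr_kernel_subspace gr_kernelS.
exact: (chain_stable (r := fun U V => forall f, V f -> U f) (fun _ _ => id)
  (fun _ _ _ UV VW f => UV f \o VW f) stab gr_kernel_next n k0n f).
Qed.

End Chains.

Section Quotient.
Variables (R : unitRingType) (m : nat).
Local Notation gring := (gring R m).
Local Notation gr_rad := (@gr_rad R m).

Definition gr_quot := Quotient.quot gr_rad.
HB.instance Definition _ := GRing.Zmodule.on gr_quot.
HB.instance Definition _ := EqQuotient.on gr_quot.

(* A named copy of \pi, on which the ring morphism instance is declared. *)
Definition gr_proj : gring -> gr_quot := \pi.

Lemma gr_proj_eqE (f g : gring) : (gr_proj f == gr_proj g) = (f - g \in gr_rad).
Proof. by rewrite Quotient.idealrBE. Qed.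

Lemma gr_projK : cancel repr gr_proj.
Proof. exact: reprK. Qed.

Definition gr_qmul := lift_op2 gr_quot *%R.

Lemma pi_gr_qmul : {morph \pi_gr_quot : f g / f * g >-> gr_qmul f g}.
Proof.
move=> f g; unlock gr_qmul; apply/eqP; rewrite gr_proj_eqE.
set f' := repr _; set g' := repr _.
have ff' : f' - f \in gr_rad by rewrite -gr_proj_eqE gr_projK.
have gg' : g' - g \in gr_rad by rewrite -gr_proj_eqE gr_projK.
rewrite -opprB rpredN -[f' * g'](subrK (f' * g)) -addrA -mulrBr -mulrBl.
by apply: rpredD; [apply: gr_radMl | apply: gr_radMr].
Qed.

Canonical pi_gr_qmul_morph := PiMorph2 pi_gr_qmul.

Lemma gr_qmulA : associative gr_qmul.
Proof. by move=> x y z; rewrite -[x]reprK -[y]reprK -[z]reprK !piE mulrA. Qed.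

Lemma gr_qmul1 : left_id (gr_proj 1) gr_qmul.
Proof. by move=> x; rewrite -[x]reprK !piE mul1r. Qed.

Lemma gr_qmulr1 : right_id (gr_proj 1) gr_qmul.
Proof. by move=> x; rewrite -[x]reprK !piE mulr1. Qed.

Lemma gr_qmulDl : left_distributive gr_qmul +%R.
Proof. by move=> x y z; rewrite -[x]reprK -[y]reprK -[z]reprK !piE mulrDl. Qed.

Lemma gr_qmulDr : right_distributive gr_qmul +%R.
Proof. by move=> x y z; rewrite -[x]reprK -[y]reprK -[z]reprK !piE mulrDr. Qed.

HB.instance Definition _ := GRing.Zmodule_isPzRing.Build gr_quot
  gr_qmulA gr_qmul1 gr_qmulr1 gr_qmulDl gr_qmulDr.

Lemma gr_proj_zmod : zmod_morphism gr_proj.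
Proof. exact: raddfB. Qed.

Lemma gr_proj_monoid : monoid_morphism gr_proj.
Proof. by split=> // f g; rewrite /gr_proj pi_gr_qmul. Qed.

HB.instance Definition _ := GRing.isZmodMorphism.Build gring gr_quot gr_proj gr_proj_zmod.
HB.instance Definition _ := GRing.isMonoidMorphism.Build gring gr_quot gr_proj gr_proj_monoid.

End Quotient.

Section Main.
Variables (R : unitRingType) (m : nat).
Hypotheses (Rloc : local_ring R) (R2 : char_quot_not2 R).
Local Notation n := m.+1.
Local Notation gring := (gring R m).
Local Notation pi := (@gr_proj R m).

Lemma gr_quot_lift (u : gring) : invertible (pi u) -> invertible u.
Proof.
case=> v [uv vu]; apply: (@gr_invertible_lift _ _ _ (repr v));
by rewrite -gr_proj_eqE rmorphM /= gr_projK ?uv ?vu rmorph1.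
Qed.

Lemma gr_quot_two : invertible (2%:R : gr_quot R m).
Proof.
rewrite -(rmorph_nat pi) -(rmorph_nat gr_const).
exact/invertible_rmorph/invertible_rmorph/invertibleP/local_notjacobson_unit.
Qed.

Lemma gr_sum_two_units (a : gring) : exists2 u, invertible u & invertible (a - u).
Proof.
have [b b_rad] := gr_rad_pi_regular Rloc a.
have reg : pi a ^+ n = pi a ^+ (n + n) * pi b.
  by apply/eqP; rewrite -!rmorphXn -rmorphM gr_proj_eqE.
have ann x : pi a ^+ (n + n) * x = 0 -> pi a ^+ n * x = 0.
  rewrite -[x]gr_projK -!rmorphXn -!rmorphM -(rmorph0 pi) => /eqP.
  rewrite !gr_proj_eqE !subr0 => /(gr_rad_pi_ann Rloc) ann.
  by apply/eqP; rewrite gr_proj_eqE subr0.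
have [u u_inv au_inv] := strongly_pi_regular_two_units (ltn0Sn m) reg ann gr_quot_two.
by exists (repr u); apply: gr_quot_lift; rewrite ?rmorphB /= gr_projK.
Qed.

End Main.

Theorem corollary11 (R : unitRingType) (n : nat) :
  (0 < n)%N -> local_ring R -> char_quot_not2 R -> gr_two_clean R n.
Proof.
case: n => [//|m] _ Rloc R2 a.
have [u u_inv au_inv] := gr_sum_two_units Rloc R2 (a : gring R m).
exists 0, u, (a - u); split => //; first exact: (mulr0 (0 : gring R m)).
by rewrite add0r addrC subrK.
Qed.
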